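(* Let $L$ be a normal incline, $n\ge 3$, and let $A$ be an $n\times n$ completely positive matrix over $L$ such that every left almost principal $2\times 2$ submatrix of $A$ has positive determinant greater than or equal to its negative determinant. Then $A$ is UL-completely positive.
   Context: An incline is a nonempty set $L$ with binary operations $\oplus,\otimes$ such that $(L,\oplus)$ is a semilattice ($\oplus$ associative, commutative, idempotent), $(L,\otimes)$ is a semigroup, $x\otimes(y\oplus z)=(x\otimes y)\oplus(x\otimes z)$ and $x\oplus(x\otimes y)=x$ for all $x,y,z$. The order is $x\le y\iff x\oplus y=y$; $L$ is commutative if $\otimes$ is commutative. An r-ideal is a nonempty $J\subseteq L$ closed under $\oplus$ and under multiplication by arbitrary elements of $L$; a lattice ideal is a nonempty $J\subseteq L$ closed under $\oplus$ and downward closed. A commutative incline $L$ is normal if it has an additive identity $\mathbf{0}$ and a multiplicative identity $\mathbf{1}$ and: every singly generated r-ideal is a lattice ideal (LI-property); for each $x$ there is a unique $c$ with $c\otimes c=x$; $x\otimes y\le(x\otimes x)\oplus(y\otimes y)$ for all $x,y$. Matrix product: $(BC)_{ij}=\bigoplus_k b_{ik}\otimes c_{kj}$; $B^T$ is the transpose. $A$ is completely positive if $A=BB^T$ for some $n\times k$ matrix $B$ over $L$ all of whose entries are of the form $c\otimes c$. $A$ is UL-completely positive if $A=UU^T$ for some upper triangular $n\times n$ matrix $U$ over $L$. For index sets $\alpha=\{\alpha_1<\dots<\alpha_k\}$, $\beta=\{\beta_1<\dots<\beta_k\}$, $A[\alpha|\beta]$ is the submatrix with $(i,j)$ entry $a_{\alpha_i\beta_j}$;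 it is left almost principal if $\alpha_j=\beta_j$ for $2\le j\le k$ but $\alpha_1\ne\beta_1$. For a $2\times 2$ matrix $\begin{bmatrix}p&q\\ r&s\end{bmatrix}$, the positive determinant is $p\otimes s$ and the negative determinant is $q\otimes r$. *)

From mathcomp Require Import all_boot all_algebra.
Set Implicit Arguments. Unset Strict Implicit. Unset Printing Implicit Defensive.

Record cincline := CIncline {
  car :> Type;
  iadd : car -> car -> car;
  imul : car -> car -> car;
  izero : car;
  ione : car;
  iaddA : forall x y z, iadd x (iadd y z) = iadd (iadd x y) z;
  iaddC : forall x y, iadd x y = iadd y x;
  iaddI : forall x, iadd x x = x;
  imulA : forall x y z, imul x (imul y z) = imul (imul x y) z;
  imulC : forall x y, imul x y = imul y x;
  imulDr : forall x y z, imul x (iadd y z) = iadd (imul x y) (imul x z);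
  iabsorb : forall x y, iadd x (imul x y) = x;
  iadd0 : forall x, iadd izero x = x;
  imul1 : forall x, imul ione x = x
}.

Section Incline.
Variable L : cincline.

Definition ile (x y : L) : Prop := iadd x y = y.

Definition r_ideal (J : L -> Prop) : Prop :=
  (exists x, J x) /\ (forall x y, J x -> J y -> J (iadd x y)) /\
  (forall x y, J x -> J (imul x y) /\ J (imul y x)).

Definition lattice_ideal (J : L -> Prop) : Prop :=
  (exists x, J x) /\ (forall x y, J x -> J y -> J (iadd x y)) /\
  (forall x y, J y -> ile x y -> J x).

Definition gen_r_ideal (a : L) : L -> Prop :=
  fun x => forall J, r_ideal J -> J a -> J x.

Definition normal_incline : Prop :=
  (forall a, lattice_ideal (gen_r_ideal a)) /\
  (forall x : L, exists c : L, imul c c = x /\ forall c' : L, imul c' c' = x -> c' = c) /\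
  (forall x y, ile (imul x y) (iadd (imul x x) (imul y y))).

Definition imx_mul m k p (B : 'M[L]_(m, k)) (C : 'M[L]_(k, p)) : 'M[L]_(m, p) :=
  \matrix_(i, j) \big[@iadd L/@izero L]_(l < k) @imul L (B i l) (C l j).

Definition completely_positive n (A : 'M[L]_n) : Prop :=
  exists k (B : 'M[L]_(n, k)),
    (forall i j, exists c : L, B i j = imul c c) /\ A = imx_mul B B^T.

Definition UL_completely_positive n (A : 'M[L]_n) : Prop :=
  exists U : 'M[L]_n,
    (forall i j : 'I_n, (j < i)%N -> U i j = @izero L) /\ A = imx_mul U U^T.

(* Every left almost principal 2x2 submatrix A[{a1<c}|{b1<c}], a1 <> b1,
   i.e. [[A a1 b1, A a1 c],[A c b1, A c c]], has negative determinant
   (A a1 c * A c b1) <= positive determinant (A a1 b1 * A c c). *)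
Definition lap2_pos_ge_neg n (A : 'M[L]_n) : Prop :=
  forall a1 b1 c : 'I_n, (a1 < c)%N -> (b1 < c)%N -> a1 != b1 ->
    ile (imul (A a1 c) (A c b1)) (imul (A a1 b1) (A c c)).
End Incline.

From mathcomp Require Import all_boot all_algebra.
From Stdlib Require Import IndefiniteDescription.
Set Implicit Arguments. Unset Strict Implicit. Unset Printing Implicit Defensive.

(* Write [A = B B^T] and let [s l] be the square root of [A l l].  Every entry
   of column [l] lies below [s l], hence is a multiple of it, and the left
   almost principal 2x2 conditions together with Cauchy-Schwarz give
   [A i l A j l <= s l^2 A i j] for [i, j < l].  In a normal incline a common
   factor can be cancelled from an inequality up to a multiplier fixing it, so
   column [l] can be divided by [s l] to a column [y] with [y i y j <= A i j].
   Taking [y] above the diagonal and [s l] on it gives an upper triangular [U]: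
   in [(U U^T) i j] the term of index [max i j] is exactly [A i j], and every
   other term is bounded by [A i j]. *)

Local Notation "x ⊕ y" := (iadd x y) (at level 50, left associativity).
Local Notation "x ⊗ y" := (imul x y) (at level 40, left associativity).

Section InclineOrder.
Variable L : cincline.
Implicit Types x y z t : L.

Lemma ile_refl x : ile x x.
Proof. exact: iaddI. Qed.

Lemma ile_trans x y z : ile x y -> ile y z -> ile x z.
Proof. by rewrite /ile => hxy hyz; rewrite -hyz iaddA hxy. Qed.

Lemma ile_anti x y : ile x y -> ile y x -> x = y.
Proof. by rewrite /ile => hxy hyx; rewrite -hxy iaddC hyx. Qed.

Lemma ile0x x : ile (izero L) x.
Proof. exact: iadd0. Qed.

Lemma ile_addl x y : ile x (x ⊕ y).
Proof. by rewrite /ile iaddA iaddI. Qed.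

Lemma ile_addr x y : ile y (x ⊕ y).
Proof. by rewrite iaddC; apply: ile_addl. Qed.

Lemma ile_add_lub x y z : ile x z -> ile y z -> ile (x ⊕ y) z.
Proof. by rewrite /ile => hxz hyz; rewrite -iaddA hyz hxz. Qed.

Lemma imulDl x y z : (y ⊕ z) ⊗ x = y ⊗ x ⊕ z ⊗ x.
Proof. by rewrite imulC imulDr !(imulC x). Qed.

Lemma imulr1 x : x ⊗ ione L = x.
Proof. by rewrite imulC imul1. Qed.

Lemma imul0r x : izero L ⊗ x = izero L.
Proof. by have := iabsorb (izero L) x; rewrite iadd0. Qed.

Lemma imulr0 x : x ⊗ izero L = izero L.
Proof. by rewrite imulC imul0r. Qed.

Lemma imulACA x y z t : (x ⊗ y) ⊗ (z ⊗ t) = (x ⊗ z) ⊗ (y ⊗ t).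
Proof. by rewrite -!imulA (imulA y z t) (imulC y z) -(imulA z y t). Qed.

Lemma ile_mull x y : ile (x ⊗ y) x.
Proof. by rewrite /ile iaddC iabsorb. Qed.

Lemma ile_mulr x y : ile (x ⊗ y) y.
Proof. by rewrite imulC; apply: ile_mull. Qed.

Lemma ile_mul2l x y z : ile x y -> ile (z ⊗ x) (z ⊗ y).
Proof. by rewrite /ile => hxy; rewrite -imulDr hxy. Qed.

Lemma ile_mul2r x y z : ile x y -> ile (x ⊗ z) (y ⊗ z).
Proof. by rewrite !(imulC _ z); apply: ile_mul2l. Qed.

Lemma ile_mul2 x y z t : ile x y -> ile z t -> ile (x ⊗ z) (y ⊗ t).
Proof. by move=> hxy hzt; apply: ile_trans (ile_mul2r _ hxy) (ile_mul2l _ hzt). Qed.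

Lemma ile_big_lub (I : Type) (r : seq I) (F : I -> L) x :
  (forall i, ile (F i) x) -> ile (\big[@iadd L/izero L]_(i <- r) F i) x.
Proof. by move=> hF; elim/big_rec: _ => [|i y _]; [apply: ile0x | apply: ile_add_lub]. Qed.

Lemma ile_big_term (I : eqType) (r : seq I) (F : I -> L) i :
  i \in r -> ile (F i) (\big[@iadd L/izero L]_(j <- r) F j).
Proof.
elim: r => [|a r IHr] //; rewrite in_cons big_cons => /predU1P [-> | /IHr hi].
  exact: ile_addl.
exact: ile_trans hi (ile_addr _ _).
Qed.

Lemma imul_bigl (I : Type) (r : seq I) (F : I -> L) y :
  (\big[@iadd L/izero L]_(i <- r) F i) ⊗ y = \big[@iadd L/izero L]_(i <- r) (F i ⊗ y).
Proof. exact: (big_morph (fun x => x ⊗ y) (imulDl y) (imul0r y)). Qed.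

Lemma ile_big_mul_lub (I J : Type) (r : seq I) (r' : seq J) (F : I -> L) (G : J -> L) x :
  (forall i j, ile (F i ⊗ G j) x) ->
  ile ((\big[@iadd L/izero L]_(i <- r) F i) ⊗ (\big[@iadd L/izero L]_(j <- r') G j)) x.
Proof.
move=> hFG; rewrite imul_bigl; apply: ile_big_lub => i.
by rewrite imulC imul_bigl; apply: ile_big_lub => j; rewrite imulC.
Qed.

Lemma big_imul_fix (I : Type) (r : seq I) (F : I -> L) t :
  (forall i, t ⊗ F i = t) -> t ⊗ (\big[@imul L/ione L]_(i <- r) F i) = t.
Proof. by move=> hF; elim/big_rec: _ => [|i y _ hy]; rewrite ?imulr1 // imulA hF. Qed.

Lemma ile_big_imul_term (I : eqType) (r : seq I) (F : I -> L) i :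
  i \in r -> ile (\big[@imul L/ione L]_(j <- r) F j) (F i).
Proof.
elim: r => [|a r IHr] //; rewrite in_cons big_cons => /predU1P [-> | /IHr hi].
  exact: ile_mull.
exact: ile_trans (ile_mulr _ _) hi.
Qed.

End InclineOrder.

Section NormalIncline.
Variable L : cincline.
Hypothesis normalL : normal_incline L.
Implicit Types x y z t : L.

Lemma ile_factor x y : ile x y -> exists z, x = y ⊗ z.
Proof.
case: normalL => LIgen _ hxy; have [_ [_ downI]] := LIgen y.
apply: (downI x y (fun J _ => id) hxy (fun z => exists w, z = y ⊗ w)).
  split; first by exists y, (ione L); rewrite imulr1.
  split=> [_ _ [w ->] [w' ->] | _ z [w ->]]; first by exists (w ⊕ w'); rewrite imulDr.
  by split; exists (w ⊗ z); rewrite ?[z ⊗ _]imulC imulA.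
by exists (ione L); rewrite imulr1.
Qed.

Lemma sqrt_exists x : exists y, y ⊗ y = x.
Proof. by case: normalL => _ [sqrtL _]; have [y [hy _]] := sqrtL x; exists y. Qed.

Lemma sq_inj x y : x ⊗ x = y ⊗ y -> x = y.
Proof.
case: normalL => _ [sqrtL _] hxy; have [r [_ uniq_sqrt]] := sqrtL (y ⊗ y).
by rewrite (uniq_sqrt x hxy) (uniq_sqrt y erefl).
Qed.

Lemma ile_mul_sq x y : ile (x ⊗ y) (x ⊗ x ⊕ y ⊗ y).
Proof. by case: normalL => _ [_]; apply. Qed.

(* [(x + y)^2 = y^2] because [x y <= x^2 + y^2 <= y^2]. *)
Lemma sq_ile_cancel x y : ile (x ⊗ x) (y ⊗ y) -> ile x y.
Proof.
move=> hsq; apply: sq_inj; apply: ile_anti; last exact: ile_mul2 (ile_addr x y) (ile_addr x y).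
have hxy : ile (x ⊗ y) (y ⊗ y).
  exact: ile_trans (ile_mul_sq x y) (ile_add_lub hsq (ile_refl _)).
rewrite imulDl !imulDr; apply: ile_add_lub; apply: ile_add_lub => //.
- by rewrite imulC.
- exact: ile_refl.
Qed.

Lemma sq_fix_cancel x z : x ⊗ x ⊗ z = x ⊗ x -> x ⊗ z = x.
Proof. by move=> hz; apply: sq_inj; rewrite imulACA imulA hz hz. Qed.

Lemma ile_fix x y z : ile x y -> y ⊗ z = y -> x ⊗ z = x.
Proof. by move=> /ile_factor [w ->] hz; rewrite -imulA (imulC w) imulA hz. Qed.

(* With [v = x + y]: [v^2 = y v] and [y = v z], so [z] fixes [v^2], hence [v],
   and [y = v]. *)
Lemma ile_mul_self_cancel x y : ile (x ⊗ x) (x ⊗ y) -> ile x y.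
Proof.
move=> hx; set v := x ⊕ y.
have [z hz] := ile_factor (ile_addr x y : ile y v).
have hvv : v ⊗ v = y ⊗ v.
  apply: ile_anti; last exact: ile_mul2r (ile_addr x y).
  rewrite /v imulDl; apply: ile_add_lub; last exact: ile_refl.
  have hxv : ile (x ⊗ y) (y ⊗ v) by rewrite imulC imulDr; apply: ile_addl.
  by rewrite imulDr; apply: ile_add_lub; [apply: ile_trans hx hxv | exact: hxv].
have hvz : v ⊗ z = v.
  by apply: sq_fix_cancel; rewrite {2}hvv hz -!imulA (imulC z v).
by rewrite /ile -/v hz hvz.
Qed.

(* [z] factors [t + y] through [t + y + x]. *)
Lemma ile_mul2l_cancel t x y : ile (t ⊗ x) (t ⊗ y) ->
  exists z, t ⊗ z = t /\ ile (z ⊗ x) y.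
Proof.
move=> htxy; set X := t ⊕ y.
have [z hz] := ile_factor (ile_addl X x).
exists z; split.
  have htXx : t ⊗ (X ⊕ x) = t ⊗ X.
    rewrite imulDr; apply: ile_anti; last exact: ile_addl.
    apply: ile_add_lub; first exact: ile_refl.
    exact: ile_trans htxy (ile_mul2l _ (ile_addr _ _)).
  have htX : t ⊗ X ⊗ z = t ⊗ X by rewrite -htXx -imulA -hz.
  exact: sq_fix_cancel (ile_fix (ile_mul2l t (ile_addl t y)) htX).
have hzxX : ile (z ⊗ x) X by rewrite hz imulC; apply: ile_mul2r; apply: ile_addr.
have [w hw] := ile_factor hzxX.
have htw : ile (t ⊗ w) (z ⊗ x).
  by rewrite hw imulC (imulC X); apply: ile_mul2l; apply: ile_addl.
have htwy : ile (t ⊗ w) y.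
  apply: ile_mul_self_cancel; apply: ile_trans (ile_mul2l _ (ile_trans htw (ile_mulr z x))) _.
  by rewrite (imulC t w) -!imulA; apply: ile_mul2l.
by rewrite hw /X imulDl; apply: ile_add_lub => //; apply: ile_mull.
Qed.

(* The multipliers produced for the individual pairs are combined into their
   product [W], which still fixes [s] and lies below each of them. *)
Lemma column_division (I : finType) (P : pred I) (s : L) (x : I -> L) (a : I -> I -> L) :
  (forall i, ile (x i) s) ->
  (forall i j, P i -> P j -> ile (x i ⊗ x j) (s ⊗ s ⊗ a i j)) ->
  exists y : I -> L, (forall i, s ⊗ y i = x i) /\
    (forall i j, P i -> P j -> ile (y i ⊗ y j) (a i j)).
Proof.
move=> hxs hxa.
have [z hz] := functional_choice _ (fun i => ile_factor (hxs i)).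
have hw (p : I * I) : exists w, s ⊗ s ⊗ w = s ⊗ s /\
    (P p.1 -> P p.2 -> ile (w ⊗ (z p.1 ⊗ z p.2)) (a p.1 p.2)).
  case: p => i j /=; have [/andP [Pi Pj] | nPij] := boolP (P i && P j).
    have : ile (s ⊗ s ⊗ (z i ⊗ z j)) (s ⊗ s ⊗ a i j) by rewrite imulACA -!hz; apply: hxa.
    by case/ile_mul2l_cancel=> w [sw wa]; exists w.
  by exists (ione L); split=> [|Pi Pj]; [apply: imulr1 | rewrite Pi Pj in nPij].
have [w hwp] := functional_choice _ hw.
set W := \big[@imul L/ione L]_(p : I * I) w p.
have hsW : s ⊗ W = s by apply/sq_fix_cancel/big_imul_fix => p; case: (hwp p).
exists (fun i => z i ⊗ W); split=> [i | i j Pi Pj].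
  by rewrite imulA -hz; apply: ile_fix (hxs i) hsW.
rewrite imulACA; apply: ile_trans (ile_mul2l _ (ile_mull W W)) _.
apply: ile_trans (ile_mul2l _ (ile_big_imul_term _ (mem_index_enum (i, j)))) _.
by rewrite imulC; apply: (hwp (i, j)).2.
Qed.

End NormalIncline.

Section GramMatrix.
Variables (L : cincline) (n k : nat) (B : 'M[L]_(n, k)).
Local Notation A := (imx_mul B B^T).
Implicit Types i j l : 'I_n.

Lemma gramE i j : A i j = \big[@iadd L/izero L]_(l < k) (B i l ⊗ B j l).
Proof. by rewrite mxE; apply: eq_bigr => l _; rewrite mxE. Qed.

Lemma gram_sym i j : A i j = A j i.
Proof. by rewrite !gramE; apply: eq_bigr => l _; apply: imulC. Qed.

Lemma ile_gram_diag i (l : 'I_k) : ile (B i l ⊗ B i l) (A i i).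
Proof.
by rewrite gramE; apply: (ile_big_term (fun m : 'I_k => B i m ⊗ B i m) (mem_index_enum l)).
Qed.

Hypothesis normalL : normal_incline L.

Lemma gram_cauchy_schwarz i j : ile (A i j ⊗ A i j) (A i i ⊗ A j j).
Proof.
rewrite {1 2}gramE; apply: ile_big_mul_lub => l m.
rewrite (imulC (B i m)) imulACA; apply: ile_trans (ile_mul_sq normalL _ _) _.
apply: ile_add_lub; rewrite imulACA; last rewrite imulC.
all: by apply: ile_mul2; apply: ile_gram_diag.
Qed.

Lemma ile_gram_sqrt_diag i l s : s ⊗ s = A l l -> ile (A i l) s.
Proof.
move=> hs; apply: (sq_ile_cancel normalL); rewrite hs.
exact: ile_trans (gram_cauchy_schwarz i l) (ile_mulr _ _).
Qed.

Lemma gram_lap2_column i j l : lap2_pos_ge_neg A -> (i < l)%N -> (j < l)%N ->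
  ile (A i l ⊗ A j l) (A l l ⊗ A i j).
Proof.
move=> lapA il jl; have [<- | neq_ij] := eqVneq i j.
  by rewrite imulC; apply: gram_cauchy_schwarz.
by rewrite (gram_sym j l) [A l l ⊗ _]imulC; apply: lapA.
Qed.

End GramMatrix.

Section TriangularFactor.
Variables (L : cincline) (n : nat) (A : 'M[L]_n).
Variables (s : 'I_n -> L) (y : 'I_n -> 'I_n -> L).
Implicit Types i j l : 'I_n.
Hypothesis symA : forall i j, A i j = A j i.
Hypothesis sq_s : forall l, s l ⊗ s l = A l l.
Hypothesis s_y : forall l i, (i < l)%N -> s l ⊗ y l i = A i l.
Hypothesis y_ile : forall l i j, (i < l)%N -> (j < l)%N -> ile (y l i ⊗ y l j) (A i j).

Definition triangular_factor : 'M[L]_n :=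
  (\matrix_(i, l) if (i < l)%N then y l i else if i == l then s l else izero L)%R.

Local Notation U := triangular_factor.

Lemma triangular_factor_lower i l : (l < i)%N -> U i l = izero L.
Proof. by move=> li; rewrite mxE ltnNge (ltnW li) -val_eqE /= gtn_eqF. Qed.

Lemma triangular_factor_diag l : U l l = s l.
Proof. by rewrite mxE ltnn eqxx. Qed.

Lemma triangular_factor_col i l : (i <= l)%N -> s l ⊗ U i l = A i l.
Proof.
rewrite mxE leq_eqVlt => /predU1P [/val_inj -> | il]; last by rewrite il s_y.
by rewrite ltnn eqxx sq_s.
Qed.

Lemma triangular_factor_ile i j l : (i <= l)%N -> (j <= l)%N -> ile (U i l ⊗ U j l) (A i j).
Proof.
rewrite leq_eqVlt => /predU1P [/val_inj -> | il].
  by rewrite triangular_factor_diag => /triangular_factor_col ->; rewrite symA; apply: ile_refl.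
rewrite leq_eqVlt => /predU1P [/val_inj -> | jl].
  by rewrite triangular_factor_diag imulC (triangular_factor_col (ltnW il)); apply: ile_refl.
by rewrite !mxE il jl; apply: y_ile.
Qed.

Lemma triangular_factor_gram : imx_mul U U^T = A.
Proof.
apply/matrixP => i j; rewrite mxE.
under eq_bigr => l _ do rewrite [trmx U _ _]mxE.
apply: ile_anti.
  apply: ile_big_lub => l.
  have [il | li] := leqP i l; last by rewrite triangular_factor_lower // imul0r; apply: ile0x.
  have [jl | lj] := leqP j l; last by rewrite (triangular_factor_lower lj) imulr0; apply: ile0x.
  exact: triangular_factor_ile.
have [ij | ji] := leqP i j.
  have := ile_big_term (fun l => U i l ⊗ U j l) (mem_index_enum j).
  by rewrite imulC triangular_factor_diag triangular_factor_col.
have := ile_big_term (fun l => U i l ⊗ U j l) (mem_index_enum i).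
by rewrite triangular_factor_diag (triangular_factor_col (ltnW ji)) symA.
Qed.

Lemma UL_completely_positive_of_columns : UL_completely_positive A.
Proof.
exists U; split; last by rewrite triangular_factor_gram.
by move=> i j; apply: triangular_factor_lower.
Qed.

End TriangularFactor.

Theorem mainTheorem7 (L : cincline) (n : nat) (A : 'M[L]_n) :
  normal_incline L -> (3 <= n)%N -> completely_positive A ->
  lap2_pos_ge_neg A -> UL_completely_positive A.
Proof.
move=> normalL _ [k [B [_ ->]]] lapA; set G := imx_mul B B^T in lapA *.
have [s sq_s] := functional_choice _ (fun l => sqrt_exists normalL (G l l)).
have column l : exists y : 'I_n -> L, (forall i, s l ⊗ y i = G i l) /\
    (forall i j : 'I_n, (i < l)%N -> (j < l)%N -> ile (y i ⊗ y j) (G i j)).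
  apply: (column_division normalL (P := fun i : 'I_n => (i < l)%N)
    (x := fun i => G i l)) => [i | i j il jl].
    by apply: (ile_gram_sqrt_diag normalL); apply: sq_s.
  by rewrite sq_s; apply: gram_lap2_column.
have [y hy] := functional_choice _ column.
apply: (UL_completely_positive_of_columns (s := s) (y := y)) => [i j | l | l i _ | l i j].
- exact: gram_sym.
- exact: sq_s.
- exact: (hy l).1.
- exact: (hy l).2.
Qed.
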